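(* Fix $n\ge4$ and a circular ordering $\pi$. For every chain $\mathcal C: D_0\subsetneq D_1\subsetneq\dots\subsetneq D_m$ of sets of pairwise noncrossing diagonals of $P_n$, let $\Delta_{\mathcal C}$ be the corresponding simplex of the barycentric subdivision of $K_{n-1}$ (the convex hull of the barycenters $v_{D_0},\dots,v_{D_m}$ of the corresponding faces), and define $\Phi$ on $\Delta_{\mathcal C}$ affinely by $\Phi\big(\sum_i a_i v_{D_i}\big)=\sum_i a_i\Phi(D_i)$ ($a_i\ge0$, $\sum a_i=1$), so that $\Phi(\Delta_{\mathcal C})$ is the convex hull of $\Phi(D_0),\dots,\Phi(D_m)$. Then $\Phi$ restricted to each $\Delta_{\mathcal C}$ is an embedding into the chamber $\Delta_\pi$ of $\mathfrak S_n$, these maps agree on common faces, and together they define an embedding of the associahedron $K_{n-1}$ (the union of all $\Delta_{\mathcal C}$) into the chamber $\Delta_\pi$ of $\mathfrak S_n$.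
   Context: Fix a circular ordering $\pi=(x_1,\dots,x_n)$ of a set $X$ of $n\ge4$ labels and let $P_n$ be a regular $n$-gon with edges labeled cyclically by $x_1,\dots,x_n$. Diagonals of $P_n$ correspond bijectively to nontrivial splits of $X$ circular w.r.t. $\pi$ (a diagonal separates the edge labels into the two parts); two diagonals cross if they meet in the interior of $P_n$. The chamber $\Delta_\pi$ of the network space $\mathfrak S_n$ is identified with $\{x\in\mathbb R_{\ge0}^{\mathcal D}:\sum_d x_d=1\}$, where $\mathcal D$ is the set of the $n(n-3)/2$ diagonals of $P_n$. The associahedron $K_{n-1}$ is the $(n-3)$-dimensional convex polytope whose faces correspond bijectively to sets $D$ of pairwise noncrossing diagonals of $P_n$, the face of $D$ containing the face of $D'$ iff $D\subseteq D'$; the face of $D$ has codimension $|D|$, vertices correspond to triangulations ($n-3$ diagonals), and the whole polytope corresponds to $D=\emptyset$. For a triangulation $T$, $\Phi(T)\in\mathbb R^{\mathcal D}$ has $d$-coordinate $1/(n-3)$ if $d\in T$ and $0$ otherwise. For a set $D$ of pairwise noncrossing diagonals, $\Phi(D)$ (the image of the barycenter $v_D$ of the face of $D$) is the average of $\Phi(T)$ over all triangulations $T\supseteq D$. *)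

From HB Require Import structures.
From mathcomp Require Import all_boot all_order all_algebra.
Set Implicit Arguments. Unset Strict Implicit. Unset Printing Implicit Defensive.
Import Order.TTheory GRing.Theory Num.Theory.

(* Vertices of P_n are labelled 0..n-1 cyclically; the edge labelled x_k
   joins vertices k-1 and k (any fixed cyclic convention).  A diagonal is an
   unordered pair {i,j} of non-adjacent vertices, stored as (i,j) with i < j. *)
Definition is_diag (n : nat) (p : 'I_n * 'I_n) : bool :=
  (p.1.+1 < p.2) && ~~ ((p.1 == 0 :> nat) && (p.2 == n.-1 :> nat)).

Definition diagonal (n : nat) := {p : 'I_n * 'I_n | is_diag p}.

(* two diagonals cross iff they meet in the interior of P_n,
   i.e. their endpoints strictly interleave *)
Definition crosses (n : nat) (d e : diagonal n) : bool :=
  let: (i, j) := val d in let: (k, l) := val e in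
  [&& i < k, k < j & j < l] || [&& k < i, i < l & l < j].

Definition noncrossing (n : nat) (D : {set diagonal n}) : bool :=
  [forall d in D, forall e in D, ~~ crosses d e].

Definition triangulation (n : nat) (T : {set diagonal n}) : bool :=
  noncrossing T && [forall d, noncrossing (d |: T) ==> (d \in T)].

Local Open Scope ring_scope.

Definition PhiT (R : realFieldType) (n : nat) (T : {set diagonal n})
    (d : diagonal n) : R :=
  if d \in T then ((n - 3)%N%:R)^-1 else 0.

Definition Phi (R : realFieldType) (n : nat) (D : {set diagonal n})
    (d : diagonal n) : R :=
  (#|[set T : {set diagonal n} | triangulation T && (D \subset T)]|%:R)^-1 *
  \sum_(T : {set diagonal n} | triangulation T && (D \subset T)) PhiT R T d.

(* The chamber Delta_pi = standard simplex in R^{diagonals} *)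
Definition in_chamber (R : realFieldType) (n : nat) (x : diagonal n -> R) : Prop :=
  (forall d, 0 <= x d) /\ \sum_d x d = 1.

(* A point of K_{n-1}, realized as its barycentric subdivision: a convex
   combination sum_i a_i v_{D_i} of barycenters of faces, where the D_i with
   nonzero weight form a chain of noncrossing sets (a simplex Delta_C). It is
   recorded as the weight function D |-> a_D on sets of diagonals. *)
Definition K_point (R : realFieldType) (n : nat) (w : {set diagonal n} -> R) : Prop :=
  [/\ forall D, 0 <= w D,
      \sum_D w D = 1,
      forall D, w D != 0 -> noncrossing D
    & forall D E, w D != 0 -> w E != 0 -> (D \subset E) || (E \subset D)].

Definition Phi_ext (R : realFieldType) (n : nat) (w : {set diagonal n} -> R)
    (d : diagonal n) : R :=
  \sum_D w D * Phi R D d.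

From HB Require Import structures.
From mathcomp Require Import all_boot all_order all_algebra.
From mathcomp Require Import zify.
Import Order.TTheory GRing.Theory Num.Theory.
Set Implicit Arguments. Unset Strict Implicit. Unset Printing Implicit Defensive.

(* Every maximal set of pairwise noncrossing diagonals of a convex k-gon has k - 3
   elements (cut along one of them and induct on the two smaller polygons), so each
   Phi(T) is a point of the chamber, and so are the averages Phi(D) and their convex
   combinations.
   For injectivity: Phi(D) equals 1/(n-3) on the diagonals of D and is strictly smaller
   elsewhere, since every diagonal d outside D but compatible with D can be flipped, i.e.
   some diagonal crossing d is compatible with D.  Hence, for a point supported on a chain
   D_0 < ... < D_m, the coordinates where the image attains (total weight)/(n-3) are
   exactly the diagonals of D_0.  The weights of D_0 are then compared at a diagonal
   compatible with D_0 crossing some diagonal of D_1 \ D_0: there Phi(D_0) is the only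
   nonzero term.  Removing D_0 and inducting on the chain finishes the proof. *)

Definition lo n (d : diagonal n) : 'I_n := (val d).1.
Definition hi n (d : diagonal n) : 'I_n := (val d).2.
Arguments lo : simpl never.
Arguments hi : simpl never.

Definition interleave (a b c k : nat) :=
  [&& a < c, c < b & b < k] || [&& c < a, a < k & k < b].

Section Diagonals.
Variable n : nat.
Implicit Types (d e f g : diagonal n) (D E T : {set diagonal n}).

Lemma crossesE d e : crosses d e = interleave (lo d) (hi d) (lo e) (hi e).
Proof. by case: d e => [[i j] ?] [[k l] ?]. Qed.

Lemma diag_ends d :
  [/\ (lo d).+1 < hi d, hi d < n & ~~ ((lo d == 0 :> nat) && (hi d == n.-1 :> nat))].
Proof. by case: d => [[i j] ij_diag]; rewrite /lo /hi /=; case/andP: ij_diag. Qed.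

Lemma crossesC d e : crosses d e = crosses e d.
Proof. by rewrite !crossesE /interleave; lia. Qed.

Lemma crossesxx d : crosses d d = false.
Proof. by rewrite crossesE /interleave; lia. Qed.

Lemma diag_inj d e : lo d = lo e :> nat -> hi d = hi e :> nat -> d = e.
Proof.
case: d e => [[i j] ?] [[k l] ?]; rewrite /lo /hi /= => /val_inj eik /val_inj ejl.
by apply: val_inj; rewrite /= eik ejl.
Qed.

Lemma diag_ends_neq d e : d != e -> ~~ ((lo d == lo e :> nat) && (hi d == hi e :> nat)).
Proof. by apply: contra => /andP[/eqP lo_de /eqP hi_de]; rewrite (diag_inj lo_de hi_de). Qed.

Lemma exists_diag (u v : nat) : u.+1 < v -> v < n -> ~~ ((u == 0) && (v == n.-1)) ->
  exists e, lo e = u :> nat /\ hi e = v :> nat.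
Proof.
move=> uv vn nuv; have un : u < n by lia.
have uv_diag : is_diag (Ordinal un, Ordinal vn) by apply/andP.
by exists (exist (@is_diag n) _ uv_diag).
Qed.

Lemma noncrossingP D :
  reflect (forall d e, d \in D -> e \in D -> ~~ crosses d e) (noncrossing D).
Proof.
apply: (iffP forall_inP) => [nc d e dD eD | nc d dD].
  by have /forall_inP := nc d dD; apply.
by apply/forall_inP => e eD; apply: nc.
Qed.

Lemma noncrossingS D E : D \subset E -> noncrossing E -> noncrossing D.
Proof.
move=> /subsetP sDE /noncrossingP ncE; apply/noncrossingP => d e dD eD.
by apply: ncE; apply: sDE.
Qed.

Lemma noncrossingU1 g T :
  noncrossing (g |: T) = noncrossing T && [forall f in T, ~~ crosses g f].
Proof.
apply/idP/andP => [nc | [/noncrossingP ncT /forall_inP ncg]].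
  split; first by apply: noncrossingS nc; apply: subsetUr.
  by apply/forall_inP => f fT; move/noncrossingP: nc; apply; rewrite !inE ?eqxx ?fT ?orbT.
apply/noncrossingP => d e; rewrite !inE => /predU1P[-> | dT] /predU1P[-> | eT].
- by rewrite crossesxx.
- exact: ncg.
- by rewrite crossesC; apply: ncg.
- exact: ncT.
Qed.

Lemma triangulation_ext D : noncrossing D -> exists2 T, triangulation T & D \subset T.
Proof.
move=> ncD; have [T /maxsetP[ncT maxT] sDT] := maxset_exists (P := @noncrossing n) ncD.
exists T => //; apply/andP; split => //; apply/forallP => f; apply/implyP => ncfT.
by rewrite -(maxT (f |: T)) ?setU11 ?subsetUr.
Qed.

End Diagonals.

(* The vertex x lies strictly on the side of the chord (a, b) that does not contain the
   chord (p, q) (which is assumed not to cross it). *)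
Definition separates (a b p q x : nat) : bool :=
  if (a <= p) && (q <= b) then (x < a) || (b < x) else a < x < b.

Lemma separates_crossing (a b p q u v : nat) :
  a < b -> ~~ interleave p q a b -> ~~ ((a == p) && (b == q)) ->
  p < u < q -> (v < p) || (q < v) -> interleave (minn u v) (maxn u v) a b ->
  separates a b p q u || separates a b p q v.
Proof. by rewrite /interleave /separates; case: ifP; lia. Qed.

Lemma separates_endpoint (a b p q x : nat) :
  a < b -> p < q -> ~~ interleave p q a b -> ~~ ((a == p) && (b == q)) ->
  separates a b p q x ->
  let x' := if (a == p) || (a == q) then b else a in
  [/\ (p < x' < q) = (p < x < q), x' != p, x' != q, ~~ separates a b p q x' &
      forall y z, y < z -> ~~ interleave a b y z -> ~~ interleave p q y z ->
        separates y z p q x' -> separates y z p q x].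
Proof.
move=> ab pq nc ne sx x'; split; last first.
  move=> y z; move: sx nc ne; rewrite /interleave /separates /x'.
  by repeat case: ifP => ?; lia.
all: move: sx nc ne; rewrite /interleave /separates /x'.
all: by repeat case: ifP => ?; lia.
Qed.

Section Flip.
Variables (n : nat) (D : {set diagonal n}) (d : diagonal n).
Hypotheses (ncdD : noncrossing (d |: D)) (dD : d \notin D).

Definition screens (x : nat) := [set f in D | separates (lo f) (hi f) (lo d) (hi d) x].

Lemma noninterleaving f g : f \in d |: D -> g \in d |: D ->
  ~~ interleave (lo f) (hi f) (lo g) (hi g).
Proof. by rewrite -crossesE; move/noncrossingP: ncdD; apply. Qed.

Lemma screens_endpoint f (x : nat) :
  f \in D -> separates (lo f) (hi f) (lo d) (hi d) x ->
  exists x' : 'I_n, [/\ (lo d < x' < hi d) = (lo d < x < hi d),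
    x' != lo d :> nat, x' != hi d :> nat & #|screens x'| < #|screens x|].
Proof.
move=> fD sx; have [f_lt _ _] := diag_ends f; have [d_lt _ _] := diag_ends d.
have fdD : f \in d |: D by rewrite setU1r.
have f_ab : lo f < hi f by lia.
have d_pq : lo d < hi d by lia.
have [side x'_lo x'_hi nsx' mono] := separates_endpoint f_ab d_pq
  (noninterleaving (setU11 d D) fdD) (diag_ends_neq (memPn dD f fD)) sx.
exists (if (lo f == lo d :> nat) || (lo f == hi d :> nat) then hi f else lo f).
rewrite (fun_if (@nat_of_ord n)); split => //; apply: proper_card; apply/properP; split.
  apply/subsetP => g; rewrite !inE => /andP[gD sgx']; rewrite gD /=.
  have gdD : g \in d |: D by rewrite setU1r.
  have [g_lt _ _] := diag_ends g.
  apply: mono sgx'; first lia.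
    exact: noninterleaving fdD gdD.
  exact: noninterleaving (setU11 d D) gdD.
by exists f; rewrite !inE fD.
Qed.

(* Every chord (u, v) with u strictly inside and v strictly outside d crosses d.  Take one
   minimising the number of diagonals of D separating u or v from d: a diagonal of D
   crossing it would separate u or v from d, and sliding that vertex to one of its
   endpoints would decrease this number. *)
Lemma flip_exists : exists2 e, crosses d e & noncrossing (e |: D).
Proof.
have [d_lt d_n d_ne] := diag_ends d.
pose ok (uv : 'I_n * 'I_n) :=
  (lo d < uv.1 < hi d) && ((uv.2 < lo d) || (hi d < uv.2)).
have [uv0 ok_uv0] : exists uv0, ok uv0.
  have u0 : (lo d).+1 < n by lia.
  have v0 : (if hi d < n.-1 then (hi d).+1 else (lo d).-1) < n by case: ifP; lia.
  by exists (Ordinal u0, Ordinal v0); rewrite /ok /=; case: ifP; lia.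
case: (arg_minnP (fun uv : 'I_n * 'I_n => #|screens uv.1| + #|screens uv.2|) ok_uv0).
move=> [u v] /andP[/= u_in v_out] min_uv.
have [e [eu ev]] : exists e : diagonal n, lo e = minn u v :> nat /\ hi e = maxn u v :> nat.
  have := ltn_ord u; have := ltn_ord v => vn un; apply: exists_diag; lia.
exists e; first by rewrite crossesE eu ev /interleave; lia.
rewrite noncrossingU1 (noncrossingS (subsetUr _ _) ncdD).
apply/forall_inP => f fD; apply/negP; rewrite crossesE eu ev => cef.
have [f_lt _ _] := diag_ends f; have f_ab : lo f < hi f by lia.
have fdD : f \in d |: D by rewrite setU1r.
have := separates_crossing f_ab (noninterleaving (setU11 d D) fdD)
  (diag_ends_neq (memPn dD f fD)) u_in v_out cef.
case/orP => /(screens_endpoint fD)[x [side x_lo x_hi lt_x]].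
- have ok_xv : ok (x, v) by rewrite /ok /= side u_in v_out.
  by have := min_uv _ ok_xv; rewrite leq_add2r leqNgt lt_x.
- have x_out : (x < lo d) || (hi d < x) by move: v_out side; lia.
  have ok_ux : ok (u, x) by rewrite /ok /= u_in x_out.
  by have := min_uv _ ok_ux; rewrite leq_add2l leqNgt lt_x.
Qed.

End Flip.

Lemma card3_le (T : finType) (A : {set T}) a b c :
  a \in A -> b \in A -> c \in A -> a != b -> b != c -> a != c -> 3 <= #|A|.
Proof.
move=> aA bA cA ab bc ac.
have -> : 3 = #|a |: [set b; c]| by rewrite cardsU1 cards2 !inE bc negb_or ab ac.
by apply: subset_leq_card; rewrite !subUset !sub1set aA bA cA.
Qed.

Section SubPolygons.
Variable n : nat.
Implicit Types (S : {set 'I_n}) (d f g : diagonal n) (T : {set diagonal n}).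

(* g is a diagonal of the convex polygon with vertex set S. *)
Definition subdiag S g := [&& lo g \in S, hi g \in S,
  [exists x in S, lo g < x < hi g] & [exists x in S, (x < lo g) || (hi g < x)]].

Definition triangulates S T := [/\ {subset T <= subdiag S}, noncrossing T &
  forall g, subdiag S g -> noncrossing (g |: T) -> g \in T].

Lemma subdiagS S S' g : S \subset S' -> subdiag S g -> subdiag S' g.
Proof.
move=> /subsetP sSS' /and4P[loS hiS /exists_inP[x xS x_in] /exists_inP[z zS z_out]].
by apply/and4P; split; [ | | apply/exists_inP; exists x | apply/exists_inP; exists z];
  rewrite ?sSS'.
Qed.

Lemma subdiag_setT g : subdiag [set: 'I_n] g.
Proof.
have [g_lt g_n g_ne] := diag_ends g.
apply/and4P; split; rewrite ?inE //; apply/exists_inP.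
  have x_n : (lo g).+1 < n by lia.
  by exists (Ordinal x_n); rewrite ?inE //=; lia.
case: (posnP (lo g)) => g0.
  have z_n : n.-1 < n by lia.
  by exists (Ordinal z_n); rewrite ?inE //=; lia.
have z_n : 0 < n by lia.
by exists (Ordinal z_n); rewrite ?inE //=; lia.
Qed.

Lemma min_setD1 (A : {set 'I_n}) :
  A != set0 -> exists2 x, x \in A & forall y, y \in A :\ x -> x < y.
Proof.
case/set0Pn => x0 x0A; case: (arg_minnP (@nat_of_ord n) x0A) => x xA min_x.
exists x => // y; rewrite !inE => /andP[yx yA]; rewrite ltn_neqAle min_x // andbT.
by apply: contra yx => /eqP/val_inj->.
Qed.

Lemma subdiag_exists S : 3 < #|S| -> exists g, subdiag S g.
Proof.
move=> S_gt3.
have cardD1 (A : {set 'I_n}) x : x \in A -> #|A :\ x| = #|A| - 1.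
  by move=> xA; rewrite (cardsD1 x A) xA add1n subn1.
have nz (A : {set 'I_n}) : 0 < #|A| -> A != set0 by rewrite card_gt0.
have [a aS a_min] := min_setD1 (nz S ltac:(lia)).
have [b bS b_min] := min_setD1 (nz (S :\ a) ltac:(rewrite cardD1 //; lia)).
have [c cS c_min] := min_setD1 (nz (S :\ a :\ b) ltac:(rewrite !cardD1 //; lia)).
have /set0Pn[z zS] := nz (S :\ a :\ b :\ c) ltac:(rewrite !cardD1 //; lia).
have ab := a_min b bS; have bc := b_min c cS; have cz := c_min z zS.
have [e [ea ec]] : exists e : diagonal n, lo e = a :> nat /\ hi e = c :> nat.
  by have := ltn_ord z; have := ltn_ord c => c_n z_n; apply: exists_diag; lia.
move: bS cS zS; rewrite !inE => /andP[_ bS] /and3P[_ _ cS] /and4P[_ _ _ zS].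
have lo_e : lo e = a by apply: val_inj.
have hi_e : hi e = c by apply: val_inj.
exists e; apply/and4P; split; rewrite ?lo_e ?hi_e //.
- by apply/exists_inP; exists b; rewrite ?ab.
- by apply/exists_inP; exists z; rewrite ?cz ?orbT.
Qed.

Section Split.
Variables (S : {set 'I_n}) (T : {set diagonal n}) (d : diagonal n).
Hypotheses (ST : triangulates S T) (dT : d \in T).

Definition Sin := [set x in S | lo d <= x <= hi d].
Definition Sout := [set x in S | (x <= lo d) || (hi d <= x)].
Definition Tin := [set f in T | subdiag Sin f].
Definition Tout := [set f in T | subdiag Sout f].

Lemma subdiag_d : subdiag S d.
Proof. by case: ST => sub _ _; apply: sub. Qed.

Lemma subdiag_Sin_ends g : subdiag Sin g -> (lo d <= lo g) && (hi g <= hi d).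
Proof. by case/and4P; rewrite !inE => /andP[_ ?] /andP[_ ?] _ _; lia. Qed.

Lemma subdiag_Sout_ends g : subdiag Sout g ->
  ((lo g <= lo d) || (hi d <= lo g)) && ((hi g <= lo d) || (hi d <= hi g)).
Proof. by case/and4P; rewrite !inE => /andP[_ ?] /andP[_ ?] _ _; lia. Qed.

Lemma subdiag_Sin_d : ~~ subdiag Sin d.
Proof.
by apply/negP => /and4P[_ _ _ /exists_inP[x]]; rewrite inE => /andP[_ ?]; lia.
Qed.

Lemma subdiag_Sout_d : ~~ subdiag Sout d.
Proof.
by apply/negP => /and4P[_ _ /exists_inP[x]]; rewrite inE => /andP[_ ?]; lia.
Qed.

Lemma subdiag_Sin_Sout g : subdiag Sin g -> ~~ subdiag Sout g.
Proof.
move=> gin; apply/negP => /subdiag_Sout_ends gout.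
have [g_lt _ _] := diag_ends g; have gnest := subdiag_Sin_ends gin.
have gd : g = d by apply: diag_inj; lia.
by rewrite gd (negPf subdiag_Sin_d) in gin.
Qed.

Lemma subdiag_Sin_nested f : subdiag S f -> f != d ->
  lo d <= lo f -> hi f <= hi d -> subdiag Sin f.
Proof.
move=> /and4P[loS hiS /exists_inP[x xS x_in] _] /diag_ends_neq fd dlo dhi.
have [f_lt _ _] := diag_ends f; have /and4P[loS_d hiS_d _ _] := subdiag_d.
apply/and4P; split; rewrite ?inE ?loS ?hiS /=; try lia.
  by apply/exists_inP; exists x => //; rewrite inE xS /=; lia.
apply/exists_inP; case: (ltnP (lo d) (lo f)) => dlo'.
  by exists (lo d); [rewrite inE loS_d /= | ]; lia.
by exists (hi d); [rewrite inE hiS_d /= | ]; lia.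
Qed.

Lemma subdiag_Sout_apart f : subdiag S f -> f != d -> ~~ crosses d f ->
  ~~ ((lo d <= lo f) && (hi f <= hi d)) -> subdiag Sout f.
Proof.
move=> /and4P[loS hiS /exists_inP[x xS x_in] /exists_inP[z zS z_out]] /diag_ends_neq fd.
rewrite crossesE /interleave => ndf nnest.
have [f_lt _ _] := diag_ends f; have [d_lt _ _] := diag_ends d.
have /and4P[loS_d hiS_d _ _] := subdiag_d.
apply/and4P; split; rewrite ?inE ?loS ?hiS /=; try lia; apply/exists_inP.
  case: (boolP ((hi f <= lo d) || (hi d <= lo f))) => apart.
    by exists x => //; rewrite inE xS /=; lia.
  case: (ltnP (lo f) (lo d)) => flo.
    by exists (lo d); [rewrite inE loS_d /= | ]; lia.
  by exists (hi d); [rewrite inE hiS_d /= | ]; lia.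
case: (leqP (hi f) (lo d)) => fhi.
  by exists (hi d); [rewrite inE hiS_d /= | ]; lia.
case: (leqP (hi d) (lo f)) => flo.
  by exists (lo d); [rewrite inE loS_d /= | ]; lia.
by exists z => //; rewrite inE zS /=; lia.
Qed.

Lemma subdiag_split f : f \in T -> f != d -> subdiag Sin f || subdiag Sout f.
Proof.
case: ST => sub ncT _ fT fd.
case: (boolP ((lo d <= lo f) && (hi f <= hi d))) => [/andP[dlo dhi] | nnest].
  by rewrite (subdiag_Sin_nested (sub _ fT) fd dlo dhi).
have ndf : ~~ crosses d f by move/noncrossingP: ncT; apply.
by rewrite (subdiag_Sout_apart (sub _ fT) fd ndf nnest) orbT.
Qed.

Lemma T_split : T = d |: (Tin :|: Tout).
Proof.
apply/setP => f; rewrite !inE; case: (eqVneq f d) => [-> | fd] /=; first by rewrite dT.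
apply/idP/idP => [fT | /orP[] /andP[] //].
by case/orP: (subdiag_split fT fd) => ->; rewrite fT ?orbT.
Qed.

Lemma card_T_split : #|T| = (#|Tin| + #|Tout|).+1.
Proof.
rewrite {1}T_split cardsU1 cardsU.
have -> : Tin :&: Tout = set0.
  apply/setP => f; rewrite !inE; apply/negP => /andP[/andP[_ fin] /andP[_ fout]].
  by move: fout; rewrite (negPf (subdiag_Sin_Sout fin)).
by rewrite cards0 subn0 !inE (negPf subdiag_Sin_d) (negPf subdiag_Sout_d) !andbF.
Qed.

Lemma card_S_split : #|Sin| + #|Sout| = #|S| + 2.
Proof.
have /and4P[loS hiS _ _] := subdiag_d; have [d_lt _ _] := diag_ends d.
rewrite -cardsUI.
have -> : Sin :|: Sout = S by apply/setP => x; rewrite !inE; case: (x \in S) => /=; lia.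
have -> : Sin :&: Sout = [set lo d; hi d].
  apply/setP => x; rewrite !inE; case: (boolP (x \in S)) => xS /=.
    by rewrite -!val_eqE /=; lia.
  by apply/esym/negP => /orP[] /eqP xd; move: xS; rewrite xd ?loS ?hiS.
by rewrite cards2 -val_eqE /=; have -> : (lo d == hi d :> nat) = false by lia.
Qed.

Lemma Sin_gt2 : 2 < #|Sin|.
Proof.
have /and4P[loS hiS /exists_inP[x xS x_in] _] := subdiag_d.
by apply: (@card3_le _ _ (lo d) x (hi d)); rewrite ?inE ?loS ?hiS ?xS -?val_eqE /=; lia.
Qed.

Lemma Sout_gt2 : 2 < #|Sout|.
Proof.
have /and4P[loS hiS _ /exists_inP[z zS z_out]] := subdiag_d.
have [d_lt _ _] := diag_ends d.
by apply: (@card3_le _ _ (lo d) z (hi d)); rewrite ?inE ?loS ?hiS ?zS -?val_eqE /=; lia.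
Qed.

Lemma noncrossing_split g : ~~ crosses g d ->
  {in Tin :|: Tout, forall f, ~~ crosses g f} -> noncrossing (g |: T).
Proof.
case: ST => _ ncT _ ngd ngf; rewrite noncrossingU1 ncT; apply/forall_inP => f.
by rewrite {1}T_split => /setU1P[-> | /ngf].
Qed.

Lemma triangulates_Sin : triangulates Sin Tin.
Proof.
case: ST => _ ncT maxT; split.
- by move=> f; rewrite inE => /andP[].
- by apply: noncrossingS ncT; apply/subsetP => f; rewrite inE => /andP[].
move=> g gin; rewrite noncrossingU1 => /andP[_ /forall_inP ngf].
rewrite inE gin andbT; apply: maxT.
  by apply: subdiagS gin; apply/subsetP => x; rewrite inE => /andP[].
have /subdiag_Sin_ends := gin; have [g_lt _ _] := diag_ends g => gnest.
apply: noncrossing_split; first by rewrite crossesE /interleave; lia.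
move=> f; rewrite inE => /orP[/ngf // | ]; rewrite inE => /andP[_ /subdiag_Sout_ends].
by have [f_lt _ _] := diag_ends f; rewrite crossesE /interleave; lia.
Qed.

Lemma triangulates_Sout : triangulates Sout Tout.
Proof.
case: ST => _ ncT maxT; split.
- by move=> f; rewrite inE => /andP[].
- by apply: noncrossingS ncT; apply/subsetP => f; rewrite inE => /andP[].
move=> g gout; rewrite noncrossingU1 => /andP[_ /forall_inP ngf].
rewrite inE gout andbT; apply: maxT.
  by apply: subdiagS gout; apply/subsetP => x; rewrite inE => /andP[].
have /subdiag_Sout_ends := gout; have [g_lt _ _] := diag_ends g => gapart.
have [d_lt _ _] := diag_ends d.
apply: noncrossing_split; first by rewrite crossesE /interleave; lia.
move=> f; rewrite inE => /orP[ | /ngf //]; rewrite inE => /andP[_ /subdiag_Sin_ends].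
by have [f_lt _ _] := diag_ends f; rewrite crossesE /interleave; lia.
Qed.
End Split.

Lemma card_triangulates S T : 2 < #|S| -> triangulates S T -> #|T| = #|S| - 3.
Proof.
have [k] := ubnP #|S|; elim: k S T => // k IH S T S_lt S_gt2 ST.
have [T0 | [d dT]] := set_0Vmem T.
  rewrite T0 cards0; case: (leqP #|S| 3) => S_gt3; first lia.
  have [g gS] := subdiag_exists S_gt3.
  case: ST => _ _ maxT; suff : g \in T by rewrite T0 inE.
  apply: maxT => //; rewrite T0 setU0; apply/noncrossingP => e f.
  by rewrite !inE => /eqP-> /eqP->; rewrite crossesxx.
have S_io := card_S_split ST dT; have T_io := card_T_split ST dT.
have in_gt2 := Sin_gt2 ST dT; have out_gt2 := Sout_gt2 ST dT.
have := IH (Sin S d) (Tin S T d) ltac:(lia) in_gt2 (triangulates_Sin ST dT).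
have := IH (Sout S d) (Tout S T d) ltac:(lia) out_gt2 (triangulates_Sout ST dT).
lia.
Qed.

Lemma card_triangulation T : 2 < n -> triangulation T -> #|T| = n - 3.
Proof.
move=> n_gt2 /andP[ncT /forallP maxT]; rewrite -[n in n - 3]card_ord -cardsT.
apply: card_triangulates; first by rewrite cardsT card_ord.
split=> // [f _ | g _ ncg]; first exact: subdiag_setT.
by have /implyP := maxT g; apply.
Qed.
End SubPolygons.

Lemma subset_chain_min (T : finType) (A : {set {set T}}) : A != set0 ->
  {in A &, forall D E : {set T}, (D \subset E) || (E \subset D)} ->
  exists2 D0, D0 \in A & {in A, forall E : {set T}, D0 \subset E}.
Proof.
case/set0Pn => X XA chainA.
case: (arg_minnP (fun D : {set T} => #|D|) XA) => D0 D0A minD0.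
exists D0 => // E EA; case/orP: (chainA _ _ D0A EA) => // sED0.
by rewrite (eqP _ : D0 = E) // eq_sym eqEcard sED0 minD0.
Qed.

Local Open Scope ring_scope.

Lemma sum_erase (V : nmodType) (I : finType) (F : I -> V) i0 :
  \sum_i F i = F i0 + \sum_i (if i == i0 then 0 else F i).
Proof.
rewrite (bigD1 i0) // [X in _ = _ + X](bigD1 i0) //= eqxx add0r.
by congr (_ + _); apply: eq_bigr => i /negPf->.
Qed.

Section Barycenters.
Variables (R : realFieldType) (n : nat).
Hypothesis n_ge4 : (4 <= n)%N.
Implicit Types (d e : diagonal n) (D E T : {set diagonal n}).
Implicit Types (w : {set diagonal n} -> R).

Local Notation peak := ((n - 3)%N%:R^-1 : R).

Definition tris D := [set T : {set diagonal n} | triangulation T && (D \subset T)].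

Lemma PhiE D d : Phi R D d = #|tris D|%:R^-1 * \sum_(T in tris D) PhiT R T d.
Proof. by rewrite /Phi; congr (_ * _); apply: eq_bigl => T; rewrite inE. Qed.

Lemma peak_gt0 : 0 < peak.
Proof. by rewrite invr_gt0 ltr0n subn_gt0. Qed.

Lemma PhiT_ge0 T d : 0 <= PhiT R T d.
Proof. by rewrite /PhiT; case: ifP => // _; apply: ltW peak_gt0. Qed.

Lemma PhiT_le T d : PhiT R T d <= peak.
Proof. by rewrite /PhiT; case: ifP => // _; apply: ltW peak_gt0. Qed.

Lemma card_tris_gt0 D : noncrossing D -> (0 < #|tris D|)%N.
Proof.
by case/triangulation_ext => T triT sDT; apply/card_gt0P; exists T; rewrite inE triT.
Qed.

Lemma Phi_ge0 D d : 0 <= Phi R D d.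
Proof.
by rewrite PhiE mulr_ge0 ?invr_ge0 ?ler0n ?sumr_ge0 // => T _; apply: PhiT_ge0.
Qed.

Lemma Phi_le D d : noncrossing D -> Phi R D d <= peak.
Proof.
move=> ncD; rewrite PhiE ler_pdivrMl ?ltr0n ?card_tris_gt0 //.
by rewrite mulr_natl -sumr_const; apply: ler_sum => T _; apply: PhiT_le.
Qed.

Lemma Phi_mem D d : noncrossing D -> d \in D -> Phi R D d = peak.
Proof.
move=> ncD dD; rewrite PhiE (eq_bigr (fun=> peak)); last first.
  by move=> T; rewrite inE /PhiT => /andP[_ /subsetP->].
by rewrite sumr_const -[peak *+ _]mulr_natl mulKf // pnatr_eq0 -lt0n card_tris_gt0.
Qed.

Lemma Phi_eq0 D d : ~~ noncrossing (d |: D) -> Phi R D d = 0.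
Proof.
move=> nc_dD; rewrite PhiE big1 ?mulr0 // => T; rewrite inE => /andP[/andP[ncT _] sDT].
rewrite /PhiT; case: ifP => // dT; move: nc_dD; apply: contraNeq => _.
by apply: noncrossingS ncT; rewrite subUset sub1set dT.
Qed.

Lemma Phi_gt0 D d : noncrossing (d |: D) -> 0 < Phi R D d.
Proof.
move=> nc_dD; have [T triT sdDT] := triangulation_ext nc_dD.
have ncD : noncrossing D by apply: noncrossingS nc_dD; apply: subsetUr.
have T_D : T \in tris D by rewrite inE triT (subset_trans _ sdDT) ?subsetUr.
rewrite PhiE mulr_gt0 ?invr_gt0 ?ltr0n ?card_tris_gt0 // (bigD1 T) //=.
rewrite ltr_pwDl ?sumr_ge0 // => [|T' _]; last exact: PhiT_ge0.
by rewrite /PhiT (subsetP sdDT) ?setU11 ?peak_gt0.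
Qed.

Lemma tris_avoiding D d : noncrossing D -> d \notin D ->
  exists2 T, T \in tris D & d \notin T.
Proof.
move=> ncD dD; case: (boolP (noncrossing (d |: D))) => nc_dD.
  have [e de nc_eD] := flip_exists nc_dD dD.
  have [T triT seDT] := triangulation_ext nc_eD.
  exists T; first by rewrite inE triT (subset_trans _ seDT) ?subsetUr.
  apply/negP => dT; case/andP: triT => /noncrossingP ncT _.
  by move: de; rewrite (negPf (ncT d e dT (subsetP seDT e (setU11 e D)))).
have [T triT sDT] := triangulation_ext ncD.
exists T; first by rewrite inE triT.
apply: contra nc_dD => dT; case/andP: triT => ncT _.
by apply: noncrossingS ncT; rewrite subUset sub1set dT.
Qed.

Lemma Phi_lt D d : noncrossing D -> d \notin D -> Phi R D d < peak.
Proof.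
move=> ncD dD; have [T0 T0D dT0] := tris_avoiding ncD dD.
rewrite PhiE ltr_pdivrMl ?ltr0n ?card_tris_gt0 // (cardsD1 T0) T0D natrD mulrDl mul1r.
rewrite (bigD1 T0) //= {1}/PhiT (negPf dT0) add0r addrC ltr_pwDr ?peak_gt0 //.
rewrite (eq_bigl (mem (tris D :\ T0))); last by move=> T; rewrite !inE andbC.
by rewrite mulr_natl -sumr_const; apply: ler_sum => T _; apply: PhiT_le.
Qed.

Lemma sum_Phi D : noncrossing D -> \sum_d Phi R D d = 1.
Proof.
move=> ncD; under eq_bigr do rewrite PhiE.
rewrite -mulr_sumr exchange_big /= (eq_bigr (fun=> 1)) => [|T].
  by rewrite sumr_const mulVf // pnatr_eq0 -lt0n card_tris_gt0.
rewrite inE => /andP[triT _]; rewrite /PhiT -big_mkcond /= sumr_const.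
rewrite (card_triangulation _ triT); last lia.
by rewrite -[peak *+ _]mulr_natr mulVf // pnatr_eq0; lia.
Qed.

(* A K_point without the normalisation, which erase_face does not preserve. *)
Definition chain_weight w :=
  [/\ forall D, 0 <= w D, forall D, w D != 0 -> noncrossing D &
      forall D E, w D != 0 -> w E != 0 -> (D \subset E) || (E \subset D)].

Definition supp w := [set D | w D != 0].

Definition erase_face w D0 D := if D == D0 then 0 else w D.

Lemma chain_weight_min w : chain_weight w -> supp w != set0 ->
  exists2 D0, w D0 != 0 & forall E, w E != 0 -> D0 \subset E.
Proof.
case=> _ _ chain_w /subset_chain_min[D E|D0]; first by rewrite !inE; apply: chain_w.
by rewrite inE => wD0 minD0; exists D0 => // E wE; apply: minD0; rewrite inE.
Qed.

Lemma Phi_ext_ge0 w d : (forall D, 0 <= w D) -> 0 <= Phi_ext w d.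
Proof.
by move=> w_ge0; apply: sumr_ge0 => D _; apply: mulr_ge0 => //; apply: Phi_ge0.
Qed.

Lemma min_face_Phi_ext w D0 : chain_weight w -> w D0 != 0 ->
  (forall E, w E != 0 -> D0 \subset E) ->
  forall d, (d \in D0) = (Phi_ext w d == peak * \sum_D w D).
Proof.
move=> [w_ge0 w_nc _] wD0 minD0 d; rewrite mulr_sumr /Phi_ext.
case: (boolP (d \in D0)) => dD0.
  apply/esym/eqP/eq_bigr => D _; case: (eqVneq (w D) 0) => [-> | wD].
    by rewrite mul0r mulr0.
  by rewrite (Phi_mem (w_nc D wD) (subsetP (minD0 D wD) d dD0)) mulrC.
apply/esym/lt_eqF; rewrite (bigD1 D0) // [X in _ < X](bigD1 D0) //=.
have wD0_gt0 : 0 < w D0 by rewrite lt_def wD0 w_ge0.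
rewrite ltr_leD ?[peak * _]mulrC ?ltr_pM2l ?Phi_lt ?w_nc //.
apply: ler_sum => D _; rewrite [peak * _]mulrC.
case: (eqVneq (w D) 0) => [-> | wD]; first by rewrite !mul0r.
by rewrite ler_wpM2l ?w_ge0 ?Phi_le ?w_nc.
Qed.

Lemma min_face_witness w D0 : chain_weight w -> w D0 != 0 ->
  (forall E, w E != 0 -> D0 \subset E) ->
  exists2 e, 0 < Phi R D0 e & forall D, w D != 0 -> D != D0 -> Phi R D e = 0.
Proof.
move=> [_ w_nc w_chain] wD0 minD0; have ncD0 := w_nc D0 wD0.
case: (eqVneq (supp w :\ D0) set0) => [only_D0 | /subset_chain_min[D E | D1]].
- have [T triT sD0T] := triangulation_ext ncD0.
  have /set0Pn[e eT] : T != set0.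
    by rewrite -card_gt0 (card_triangulation _ triT); lia.
  case/andP: triT => ncT _.
  exists e => [|D wD DD0].
    by apply: Phi_gt0; apply: noncrossingS ncT; rewrite subUset sub1set eT.
  by move/setP/(_ D): only_D0; rewrite !inE DD0 wD.
- by rewrite !inE => /andP[_ ?] /andP[_ ?]; apply: w_chain.
rewrite !inE => /andP[D1D0 wD1] minD1.
have /properP[_ [d dD1 dD0]] : D0 \proper D1 by rewrite properEneq eq_sym D1D0 minD0.
have nc_dD0 : noncrossing (d |: D0).
  by apply: noncrossingS (w_nc D1 wD1); rewrite subUset sub1set dD1 minD0.
have [e de nc_eD0] := flip_exists nc_dD0 dD0.
exists e => [|D wD DD0]; first exact: Phi_gt0.
apply: Phi_eq0; apply: contraTN de => /noncrossingP nc_eD.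
rewrite crossesC nc_eD ?setU11 //.
by rewrite setU1r // (subsetP (minD1 D _)) // !inE DD0.
Qed.

Lemma min_face_weight_le w1 w2 D0 : chain_weight w1 -> (forall D, 0 <= w2 D) ->
  w1 D0 != 0 -> (forall E, w1 E != 0 -> D0 \subset E) ->
  Phi_ext w1 =1 Phi_ext w2 -> w2 D0 <= w1 D0.
Proof.
move=> c1 w2_ge0 w1D0 minD0 Phi12.
have [e Phi_e_gt0 Phi_e0] := min_face_witness c1 w1D0 minD0.
rewrite -(ler_pM2r Phi_e_gt0).
have -> : w1 D0 * Phi R D0 e = Phi_ext w1 e.
  rewrite /Phi_ext (bigD1 D0) //= big1 ?addr0 // => D DD0.
  by case: (eqVneq (w1 D) 0) => [-> | w1D]; rewrite ?mul0r ?Phi_e0 ?mulr0.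
rewrite Phi12 /Phi_ext (bigD1 D0) //= lerDl.
by apply: sumr_ge0 => D _; apply: mulr_ge0 => //; apply: Phi_ge0.
Qed.

Lemma Phi_ext_erase w D0 d :
  Phi_ext w d = w D0 * Phi R D0 d + Phi_ext (erase_face w D0) d.
Proof.
rewrite /Phi_ext (sum_erase _ D0); congr (_ + _); apply: eq_bigr => D _.
by rewrite /erase_face; case: ifP; rewrite ?mul0r.
Qed.

Lemma chain_weight_erase w D0 : chain_weight w -> chain_weight (erase_face w D0).
Proof.
rewrite /erase_face; case=> w_ge0 w_nc w_chain; split=> [D | D | D E].
- by case: ifP.
- by case: ifP => _; [rewrite eqxx | apply: w_nc].
- case: ifP => _; first by rewrite eqxx.
  by case: ifP => _; [rewrite eqxx | apply: w_chain].
Qed.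

Lemma card_supp_erase w D0 : w D0 != 0 -> #|supp (erase_face w D0)| = #|supp w|.-1.
Proof.
move=> wD0; rewrite (cardsD1 D0 (supp w)) inE wD0 add1n /=; apply: eq_card => D.
rewrite !inE /erase_face.
by case: (eqVneq D D0) => [-> | DD0]; rewrite ?eqxx //= (negPf DD0).
Qed.

Lemma chain_weight_eq0 w1 w2 : supp w1 = set0 -> (forall D, 0 <= w2 D) ->
  \sum_D w1 D = \sum_D w2 D -> w1 =1 w2.
Proof.
move=> supp0 w2_ge0 sum12.
have w1_0 D : w1 D = 0 by apply/eqP; move/setP/(_ D): supp0; rewrite !inE => /negbFE.
have sum2_0 : \sum_D w2 D = 0 by rewrite -sum12 big1.
by move=> D; rewrite w1_0 (psumr_eq0P (fun D _ => w2_ge0 D) sum2_0).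
Qed.

Lemma chain_weight_inj w1 w2 : chain_weight w1 -> chain_weight w2 ->
  \sum_D w1 D = \sum_D w2 D -> Phi_ext w1 =1 Phi_ext w2 -> w1 =1 w2.
Proof.
have [k] := ubnP #|supp w1|; elim: k w1 w2 => // k IH w1 w2 supp_lt c1 c2 sum12 Phi12.
have [w1_ge0 _ _] := c1; have [w2_ge0 _ _] := c2.
have [supp1_0 | supp1_n0] := eqVneq (supp w1) set0; first exact: chain_weight_eq0.
have [supp2_0 | supp2_n0] := eqVneq (supp w2) set0.
  by move=> D; apply/esym; apply: chain_weight_eq0.
have [D0 w1D0 min1] := chain_weight_min c1 supp1_n0.
have [E0 w2E0 min2] := chain_weight_min c2 supp2_n0.
have E0D0 : E0 = D0.
  apply/setP => d.
  by rewrite (min_face_Phi_ext c1 w1D0 min1) (min_face_Phi_ext c2 w2E0 min2) Phi12 sum12.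
subst E0.
have w12 : w1 D0 = w2 D0.
  apply/le_anti/andP; split; last exact: min_face_weight_le c1 w2_ge0 w1D0 min1 Phi12.
  by apply: min_face_weight_le c2 w1_ge0 w2E0 min2 _ => d; rewrite Phi12.
have erase12 : erase_face w1 D0 =1 erase_face w2 D0.
  apply: IH (chain_weight_erase D0 c1) (chain_weight_erase D0 c2) _ _.
  - by rewrite card_supp_erase //; move: supp1_n0; rewrite -card_gt0; lia.
  - by apply: (addrI (w1 D0)); rewrite -sum_erase w12 -sum_erase.
  - move=> d; apply: (addrI (w1 D0 * Phi R D0 d)).
    by rewrite -Phi_ext_erase w12 -Phi_ext_erase.
move=> D; case: (eqVneq D D0) => [-> // | DD0].
by have := erase12 D; rewrite /erase_face (negPf DD0).
Qed.

Lemma K_point_chain_weight w : K_point w -> chain_weight w.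
Proof. by case. Qed.

Lemma Phi_ext_in_chamber w : K_point w -> in_chamber (Phi_ext w).
Proof.
case=> w_ge0 w_sum1 w_nc _; split=> [d | ]; first exact: Phi_ext_ge0.
rewrite /Phi_ext exchange_big /= -w_sum1; apply: eq_bigr => D _.
rewrite -mulr_sumr; case: (eqVneq (w D) 0) => [-> | wD]; first by rewrite !mul0r.
by rewrite sum_Phi ?mulr1 ?w_nc.
Qed.
End Barycenters.

Unset Implicit Arguments.

Theorem proposition11 (R : realFieldType) (n : nat) (hn : (4 <= n)%N) :
  (forall w : {set diagonal n} -> R, K_point w -> in_chamber (Phi_ext w)) /\
  (forall w1 w2 : {set diagonal n} -> R, K_point w1 -> K_point w2 ->
     Phi_ext w1 =1 Phi_ext w2 -> w1 =1 w2).
Proof.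
split=> [w | w1 w2 kw1 kw2 Phi12]; first exact: Phi_ext_in_chamber.
have [_ sum1 _ _] := kw1; have [_ sum2 _ _] := kw2.
apply: (chain_weight_inj hn (K_point_chain_weight kw1) (K_point_chain_weight kw2)) Phi12.
by rewrite sum1 sum2.
Qed.
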